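(* Let $(X,s)$ be a complete strong partial metric space, let $x_o\in X$, and let $f:X\to X$ be a Cauchy function at $x_o$. If $f$ is weakly orbitally continuous at $x_o$, then $f$ has a fixed point.
   Context: A strong partial metric on $X$ is $s:X\times X\to\mathbb{R}$ with, for all $x,y,z$: $s(x,x)<s(x,y)$ whenever $x\neq y$; $s(x,y)=s(y,x)$; $s(x,y)\le s(x,z)+s(z,y)-s(z,z)$. A point $a$ is a limit of $\{x_i\}$ iff for every $\epsilon>0$ there is $N$ with $s(a,x_i)-s(a,a)<\epsilon$ for all $i>N$ (convergence in the topology generated by the balls $\{y\mid s(x,y)-s(x,x)<\epsilon\}$). $\{x_i\}$ is Cauchy with central distance $r$ if for every $\epsilon>0$ there is $N$ with $|s(x_i,x_j)-r|<\epsilon$ for $i\ge j>N$; a special limit is a limit $a$ with $s(a,a)=r$; $(X,s)$ is complete if every Cauchy sequence has a special limit. $f$ is a Cauchy function at $x_o$ if the orbit $\{f^i(x_o)\}$ ($f^0(x_o)=x_o$, $f^{i+1}(x_o)=f(f^i(x_o))$) is Cauchy. $f$ is weakly orbitally continuous at $x_o$ if whenever $a$ is a special limit of $\{f^i(x_o)\}$, $f(a)$ is a limit of $\{f^i(x_o)\}$. *)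

From Stdlib Require Import Reals.
Open Scope R_scope.

Definition strong_partial_metric {X : Type} (s : X -> X -> R) : Prop :=
  (forall x y : X, x <> y -> s x x < s x y) /\
  (forall x y : X, s x y = s y x) /\
  (forall x y z : X, s x y <= s x z + s z y - s z z).

Definition is_limit {X : Type} (s : X -> X -> R) (u : nat -> X) (a : X) : Prop :=
  forall eps : R, 0 < eps ->
    exists N : nat, forall i : nat, (i > N)%nat -> s a (u i) - s a a < eps.

Definition cauchy_central {X : Type} (s : X -> X -> R) (u : nat -> X) (r : R) : Prop :=
  forall eps : R, 0 < eps ->
    exists N : nat, forall i j : nat, (i >= j)%nat -> (j > N)%nat ->
      Rabs (s (u i) (u j) - r) < eps.

Definition is_cauchy {X : Type} (s : X -> X -> R) (u : nat -> X) : Prop :=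
  exists r : R, cauchy_central s u r.

Definition special_limit {X : Type} (s : X -> X -> R) (u : nat -> X) (a : X) : Prop :=
  exists r : R, cauchy_central s u r /\ is_limit s u a /\ s a a = r.

Definition complete_spm {X : Type} (s : X -> X -> R) : Prop :=
  forall u : nat -> X, is_cauchy s u -> exists a : X, special_limit s u a.

Fixpoint orbit {X : Type} (f : X -> X) (x : X) (i : nat) : X :=
  match i with
  | O => x
  | S k => f (orbit f x k)
  end.

Definition cauchy_function_at {X : Type} (s : X -> X -> R) (f : X -> X) (x0 : X) : Prop :=
  is_cauchy s (orbit f x0).

Definition weakly_orbitally_continuous_at {X : Type} (s : X -> X -> R)
    (f : X -> X) (x0 : X) : Prop :=
  forall a : X, special_limit s (orbit f x0) a -> is_limit s (orbit f x0) (f a).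

(* If a is a special limit of an orbit and f a is also a limit of it, the triangle
   inequality through the orbit points gives s a (f a) <= s a a + s (f a) (f a) - r
   in the limit, i.e. s a (f a) <= s (f a) (f a); the strong axiom
   s y y < s x y for x <> y then forces f a = a. *)
From Stdlib Require Import Reals Lra Lia Classical.
Open Scope R_scope.

Section StrongPartialMetric.

Context {X : Type} {s : X -> X -> R}.
Hypothesis s_spm : strong_partial_metric s.

Lemma spm_eq_of_le_self {x y : X} : s x y <= s y y -> x = y.
Proof.
  destruct s_spm as [s_lt_diag [s_sym _]].
  intros Hle; apply NNPP; intros Hxy.
  assert (Hlt := s_lt_diag y x (not_eq_sym Hxy)).
  rewrite (s_sym y x) in Hlt; lra.
Qed.

Lemma special_limit_le_limit {u : nat -> X} {a b : X} :
  special_limit s u a -> is_limit s u b -> s a b <= s b b.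
Proof.
  destruct s_spm as [_ [s_sym s_triangle]].
  intros [r [Hcauchy [Ha Haa]]] Hb.
  apply Rle_plus_epsilon; intros eps Heps.
  assert (Heps3 : 0 < eps / 3) by lra.
  destruct (Ha _ Heps3) as [Na HNa].
  destruct (Hb _ Heps3) as [Nb HNb].
  destruct (Hcauchy _ Heps3) as [Nc HNc].
  set (i := (Na + Nb + Nc + 1)%nat).
  assert (Hai := HNa i ltac:(unfold i; lia)).
  assert (Hbi := HNb i ltac:(unfold i; lia)).
  assert (Hii := HNc i i (Nat.le_refl i) ltac:(unfold i; lia)).
  assert (Htri := s_triangle a b (u i)).
  rewrite (s_sym (u i) b) in Htri.
  apply Rabs_def2 in Hii; lra.
Qed.

End StrongPartialMetric.

Theorem theorem7p13 (X : Type) (s : X -> X -> R) (x0 : X) (f : X -> X) :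
  strong_partial_metric s ->
  complete_spm s ->
  cauchy_function_at s f x0 ->
  weakly_orbitally_continuous_at s f x0 ->
  exists x : X, f x = x.
Proof.
  intros Hspm Hcomplete Hcauchy Hwoc.
  destruct (Hcomplete _ Hcauchy) as [a Ha].
  exists a; symmetry.
  apply (spm_eq_of_le_self Hspm).
  exact (special_limit_le_limit Hspm Ha (Hwoc a Ha)).
Qed.
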